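(* A formula $\varphi\in\mathcal{L}$ is valid in all constructive Chellas models if and only if it is derivable in $\mathsf{ConstCK}$.
   Context: Language $\mathcal{L}$: formulas $\varphi ::= p \mid \bot \mid \varphi\wedge\varphi \mid \varphi\vee\varphi \mid \varphi\to\varphi \mid \varphi \mathrel{\Box\!\!\to} \varphi \mid \varphi \mathrel{\Diamond\!\!\to}\varphi$; $\neg\varphi:=\varphi\to\bot$, $\top:=\neg\bot$, $\varphi\leftrightarrow\psi:=(\varphi\to\psi)\wedge(\psi\to\varphi)$. $\mathsf{ConstCK}$: any axiomatisation of intuitionistic propositional logic in $\mathcal{L}$ with modus ponens, plus axioms CM$_\Box$: $(\varphi\mathrel{\Box\!\!\to}\psi\wedge\chi)\to(\varphi\mathrel{\Box\!\!\to}\psi)\wedge(\varphi\mathrel{\Box\!\!\to}\chi)$; CC$_\Box$: $(\varphi\mathrel{\Box\!\!\to}\psi)\wedge(\varphi\mathrel{\Box\!\!\to}\chi)\to(\varphi\mathrel{\Box\!\!\to}\psi\wedge\chi)$; CN$_\Box$: $\varphi\mathrel{\Box\!\!\to}\top$; CN$_\Diamond$: $\neg(\varphi\mathrel{\Diamond\!\!\to}\bot)$; CK$_\Diamond$: $(\varphi\mathrel{\Box\!\!\to}(\psi\to\chi))\to((\varphi\mathrel{\Diamond\!\!\to}\psi)\to(\varphi\mathrel{\Diamond\!\!\to}\chi))$; rules RA$_\Box$: from $\varphi\leftrightarrow\rho$ infer $(\varphi\mathrel{\Box\!\!\to}\psi)\leftrightarrow(\rho\mathrel{\Box\!\!\to}\psi)$;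 RC$_\Box$: from $\psi\leftrightarrow\chi$ infer $(\varphi\mathrel{\Box\!\!\to}\psi)\leftrightarrow(\varphi\mathrel{\Box\!\!\to}\chi)$; RA$_\Diamond$, RC$_\Diamond$: the same with $\mathrel{\Diamond\!\!\to}$. A constructive Chellas model is $M=\langle W,\le,R,V\rangle$ with $W$ a nonempty set, $\le$ a reflexive transitive relation on $W$, $V:W\to 2^{Atm}$ monotone ($w\le w'$ implies $V(w)\subseteq V(w')$), and $R$ associating to each $X\subseteq W$ a binary relation $R_X$ on $W$. Satisfaction: $w\Vdash p$ iff $p\in V(w)$; $w\not\Vdash\bot$; $\wedge,\vee$ pointwise; $w\Vdash\varphi\to\psi$ iff for all $w'\ge w$, $w'\Vdash\varphi$ implies $w'\Vdash\psi$; with $[\varphi]=\{w\mid w\Vdash\varphi\}$: $w\Vdash\varphi\mathrel{\Box\!\!\to}\psi$ iff for all $w',v$ with $w\le w'$ and $w'R_{[\varphi]}v$, $v\Vdash\psi$; $w\Vdash\varphi\mathrel{\Diamond\!\!\to}\psi$ iff for all $w'\ge w$ there is $v$ with $w'R_{[\varphi]}v$ and $v\Vdash\psi$. A formula is valid in $M$ if satisfied at every world of $M$. *)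

Inductive form : Type :=
| Atom : nat -> form
| Bot : form
| And : form -> form -> form
| Or : form -> form -> form
| Imp : form -> form -> form
| CBox : form -> form -> form
| CDia : form -> form -> form.

Definition Neg (p : form) : form := Imp p Bot.
Definition Top : form := Neg Bot.
Definition Iff (p q : form) : form := And (Imp p q) (Imp q p).

Inductive ConstCK : form -> Prop :=
| ax_K  : forall p q, ConstCK (Imp p (Imp q p))
| ax_S  : forall p q r, ConstCK (Imp (Imp p (Imp q r)) (Imp (Imp p q) (Imp p r)))
| ax_A1 : forall p q, ConstCK (Imp (And p q) p)
| ax_A2 : forall p q, ConstCK (Imp (And p q) q)
| ax_A3 : forall p q, ConstCK (Imp p (Imp q (And p q)))
| ax_O1 : forall p q, ConstCK (Imp p (Or p q))
| ax_O2 : forall p q, ConstCK (Imp q (Or p q))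
| ax_O3 : forall p q r, ConstCK (Imp (Imp p r) (Imp (Imp q r) (Imp (Or p q) r)))
| ax_EFQ : forall p, ConstCK (Imp Bot p)
| r_MP : forall p q, ConstCK (Imp p q) -> ConstCK p -> ConstCK q
| ax_CMbox : forall p q r,
    ConstCK (Imp (CBox p (And q r)) (And (CBox p q) (CBox p r)))
| ax_CCbox : forall p q r,
    ConstCK (Imp (And (CBox p q) (CBox p r)) (CBox p (And q r)))
| ax_CNbox : forall p, ConstCK (CBox p Top)
| ax_CNdia : forall p, ConstCK (Neg (CDia p Bot))
| ax_CKdia : forall p q r,
    ConstCK (Imp (CBox p (Imp q r)) (Imp (CDia p q) (CDia p r)))
| r_RAbox : forall p r q, ConstCK (Iff p r) -> ConstCK (Iff (CBox p q) (CBox r q))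
| r_RCbox : forall p q r, ConstCK (Iff q r) -> ConstCK (Iff (CBox p q) (CBox p r))
| r_RAdia : forall p r q, ConstCK (Iff p r) -> ConstCK (Iff (CDia p q) (CDia r q))
| r_RCdia : forall p q r, ConstCK (Iff q r) -> ConstCK (Iff (CDia p q) (CDia p r)).

Record model : Type := {
  W : Type;
  W_nonempty : inhabited W;
  le : W -> W -> Prop;
  le_refl : forall w, le w w;
  le_trans : forall u v w, le u v -> le v w -> le u w;
  R : (W -> Prop) -> W -> W -> Prop;
  V : W -> nat -> Prop;
  V_mono : forall w w' p, le w w' -> V w p -> V w' p
}.

Fixpoint sat (M : model) (w : W M) (f : form) {struct f} : Prop :=
  match f with
  | Atom p => V M w p
  | Bot => False
  | And a b => sat M w a /\ sat M w b
  | Or a b => sat M w a \/ sat M w b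
  | Imp a b => forall w', le M w w' -> sat M w' a -> sat M w' b
  | CBox a b => forall w' v, le M w w' -> R M (fun u => sat M u a) w' v -> sat M v b
  | CDia a b => forall w', le M w w' -> exists v, R M (fun u => sat M u a) w' v /\ sat M v b
  end.

Definition valid_in (M : model) (f : form) : Prop := forall w : W M, sat M w f.

(** Soundness is a routine induction on derivations; the rule RA is sound
    because [R] is indexed by truth sets, and provably equivalent formulas
    have equal truth sets.

    For completeness, worlds of the canonical model are prime theories ordered
    by inclusion, and [R_X w v] holds when [X] is the truth set of some [c] and
    [v] contains every [t] with [c □→ t] in [w].  With this alone, [w] would
    have an [R_[c]]-successor containing [d] whenever [d] is consistent with
    its [c]-box projection, so [c ◇→ d] could hold at [w] without belonging
    to it.  Hence each world also carries one conditional [c ◇→ d] it does not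
    contain, and its [R_[c]]-successors must omit [d].  A diamond missing from
    [w] is refuted at the copy of [w] tagged with it, while CK◇ supplies the
    successors needed for a diamond in [w]. *)

From Stdlib Require Import Classical Lia Cantor FunctionalExtensionality PropExtensionality.

Lemma sat_mono (M : model) (f : form) (w w' : W M) :
  le M w w' -> sat M w f -> sat M w' f.
Proof.
  revert w w'; induction f; simpl; intros w w' Hle H.
  - eapply V_mono; eauto.
  - exact H.
  - destruct H; split; eauto.
  - destruct H; [left | right]; eauto.
  - intros u Hu. apply H. eapply le_trans; eauto.
  - intros u v Hu. apply H. eapply le_trans; eauto.
  - intros u Hu. apply H. eapply le_trans; eauto.
Qed.

Lemma valid_Iff_sat (M : model) (p r : form) :
  valid_in M (Iff p r) -> forall w, sat M w p <-> sat M w r.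
Proof.
  intros H w. destruct (H w) as [Hpr Hrp].
  split; intro; [apply (Hpr w) | apply (Hrp w)]; auto using le_refl.
Qed.

Lemma valid_Iff_truth_set (M : model) (p r : form) :
  valid_in M (Iff p r) -> (fun w => sat M w p) = (fun w => sat M w r).
Proof.
  intro H. apply functional_extensionality; intro w.
  apply propositional_extensionality, valid_Iff_sat, H.
Qed.

Theorem ConstCK_sound (phi : form) : ConstCK phi -> forall M, valid_in M phi.
Proof.
  intro D; induction D; intros M w; simpl.
  - intros w1 _ H1 w2 H12 _. eapply sat_mono; eauto.
  - intros w1 _ H1 w2 H12 H2 w3 H23 H3.
    assert (H13 : le M w1 w3) by (eapply le_trans; eauto).
    exact (H1 w3 H13 H3 w3 (le_refl _ _) (H2 w3 H23 H3)).
  - intros w1 _ [H _]; exact H.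
  - intros w1 _ [_ H]; exact H.
  - intros w1 _ H1 w2 H12 H2. split; [eapply sat_mono; eauto | exact H2].
  - intros w1 _ H; left; exact H.
  - intros w1 _ H; right; exact H.
  - intros w1 _ H1 w2 H12 H2 w3 H23 [H3 | H3].
    + exact (H1 w3 (le_trans _ _ _ _ H12 H23) H3).
    + exact (H2 w3 H23 H3).
  - intros w1 _ [].
  - exact (IHD1 M w w (le_refl _ _) (IHD2 M w)).
  - intros w1 _ H. split; intros u v Hu Hv; destruct (H u v Hu Hv); assumption.
  - intros w1 _ [H1 H2] u v Hu Hv. split; eauto.
  - intros u v _ _ w1 _ H; exact H.
  - intros w1 _ H. destruct (H w1 (le_refl _ _)) as [v [_ []]].
  - intros w1 _ H1 w2 H12 H2 w3 H23.
    destruct (H2 w3 H23) as [v [Hv Hs]]. exists v; split; [exact Hv |].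
    exact (H1 w3 v (le_trans _ _ _ _ H12 H23) Hv v (le_refl _ _) Hs).
  - rewrite (valid_Iff_truth_set M p r (IHD M)). split; intros w1 _ H; exact H.
  - pose proof (valid_Iff_sat M q r (IHD M)) as E.
    split; intros w1 _ H u v Hu Hv; apply E; eapply H; eauto.
  - rewrite (valid_Iff_truth_set M p r (IHD M)). split; intros w1 _ H; exact H.
  - pose proof (valid_Iff_sat M q r (IHD M)) as E.
    split; intros w1 _ H u Hu; destruct (H u Hu) as [v [Hv Hs]];
      exists v; split; [exact Hv | apply E, Hs | exact Hv | apply E, Hs].
Qed.

Lemma ConstCK_consistent : ~ ConstCK Bot.
Proof.
  intro H.
  set (M := {| W := unit; W_nonempty := inhabits tt; le := fun _ _ => True;
               le_refl := fun _ => I; le_trans := fun _ _ _ _ _ => I;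
               R := fun _ _ _ => False; V := fun _ _ => False;
               V_mono := fun _ _ _ _ h => h |}).
  exact (ConstCK_sound Bot H M tt).
Qed.

Inductive Der (G : form -> Prop) : form -> Prop :=
| Der_hyp : forall x, G x -> Der G x
| Der_thm : forall x, ConstCK x -> Der G x
| Der_mp : forall x y, Der G (Imp x y) -> Der G x -> Der G y.

Definition extend (G : form -> Prop) (a : form) : form -> Prop := fun z => G z \/ z = a.
Definition no_hyp : form -> Prop := fun _ => False.

Lemma ConstCK_Imp_refl (p : form) : ConstCK (Imp p p).
Proof.
  exact (r_MP _ _ (r_MP _ _ (ax_S p (Imp p p) p) (ax_K p (Imp p p))) (ax_K p p)).
Qed.

Lemma Der_weaken (G G' : form -> Prop) (x : form) :
  (forall z, G z -> G' z) -> Der G x -> Der G' x.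
Proof.
  intros HG D; induction D.
  - apply Der_hyp, HG; assumption.
  - apply Der_thm; assumption.
  - eapply Der_mp; eassumption.
Qed.

Lemma Der_deduction (G : form -> Prop) (a y : form) : Der (extend G a) y -> Der G (Imp a y).
Proof.
  induction 1 as [x [Hx | ->] | x Hx | x y _ IHxy _ IHx].
  - eapply Der_mp; [apply Der_thm, ax_K | apply Der_hyp, Hx].
  - apply Der_thm, ConstCK_Imp_refl.
  - eapply Der_mp; [apply Der_thm, ax_K | apply Der_thm, Hx].
  - eapply Der_mp; [eapply Der_mp; [apply Der_thm, ax_S | exact IHxy] | exact IHx].
Qed.

Lemma ConstCK_of_Der_no_hyp (x : form) : Der no_hyp x -> ConstCK x.
Proof. induction 1; [contradiction | assumption | eapply r_MP; eassumption]. Qed.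

Lemma ConstCK_Imp_of_Der (a b : form) : Der (extend no_hyp a) b -> ConstCK (Imp a b).
Proof. intro D. apply ConstCK_of_Der_no_hyp, Der_deduction, D. Qed.

Lemma Der_extend_last (G : form -> Prop) (a : form) : Der (extend G a) a.
Proof. apply Der_hyp; right; reflexivity. Qed.

Lemma Der_And_intro (G : form -> Prop) (a b : form) : Der G a -> Der G b -> Der G (And a b).
Proof. intros Ha Hb. eapply Der_mp; [eapply Der_mp; [apply Der_thm, ax_A3 | exact Ha] | exact Hb]. Qed.

Lemma Der_And_l (G : form -> Prop) (a b : form) : Der G (And a b) -> Der G a.
Proof. intro H. eapply Der_mp; [apply Der_thm, ax_A1 | exact H]. Qed.

Lemma Der_And_r (G : form -> Prop) (a b : form) : Der G (And a b) -> Der G b.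
Proof. intro H. eapply Der_mp; [apply Der_thm, ax_A2 | exact H]. Qed.

Lemma ConstCK_Iff_intro (a b : form) :
  ConstCK (Imp a b) -> ConstCK (Imp b a) -> ConstCK (Iff a b).
Proof. intros Hab Hba. exact (r_MP _ _ (r_MP _ _ (ax_A3 _ _) Hab) Hba). Qed.

Lemma ConstCK_Iff_l (a b : form) : ConstCK (Iff a b) -> ConstCK (Imp a b).
Proof. apply r_MP, ax_A1. Qed.

Lemma CBox_nec (c t : form) : ConstCK t -> ConstCK (CBox c t).
Proof.
  intro Ht. eapply r_MP; [apply ConstCK_Iff_l, r_RCbox, ConstCK_Iff_intro | apply ax_CNbox].
  - exact (r_MP _ _ (ax_K _ _) Ht).
  - exact (r_MP _ _ (ax_K _ _) (ConstCK_Imp_refl Bot)).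
Qed.

Lemma CBox_K (c x y : form) :
  ConstCK (Imp (CBox c (Imp x y)) (Imp (CBox c x) (CBox c y))).
Proof.
  set (A := And (Imp x y) x).
  assert (HA : ConstCK (Iff A (And A y))).
  { apply ConstCK_Iff_intro; apply ConstCK_Imp_of_Der.
    - apply Der_And_intro; [apply Der_extend_last |].
      eapply Der_mp; [eapply Der_And_l | eapply Der_And_r]; apply Der_extend_last.
    - eapply Der_And_l, Der_extend_last. }
  apply ConstCK_Imp_of_Der, Der_deduction.
  apply (Der_And_r _ (CBox c A)).
  eapply Der_mp; [apply Der_thm, ax_CMbox |].
  eapply Der_mp; [apply Der_thm, ConstCK_Iff_l, r_RCbox, HA |].
  eapply Der_mp; [apply Der_thm, ax_CCbox |].
  apply Der_And_intro; apply Der_hyp; [left; right | right]; reflexivity.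
Qed.

Definition closed (T : form -> Prop) : Prop := forall x, Der T x -> T x.
Definition prime (T : form -> Prop) : Prop := forall x y, T (Or x y) -> T x \/ T y.

Definition cbox_proj (c : form) (T : form -> Prop) : form -> Prop := fun t => T (CBox c t).

Lemma Der_cbox_proj (T : form -> Prop) (c t : form) :
  closed T -> Der (cbox_proj c T) t -> T (CBox c t).
Proof.
  intros HT D. induction D as [x Hx | x Hx | x y _ IHxy _ IHx].
  - exact Hx.
  - apply HT, Der_thm, CBox_nec, Hx.
  - apply HT. eapply Der_mp; [eapply Der_mp; [apply Der_thm, CBox_K |] |];
      apply Der_hyp; eassumption.
Qed.

Lemma closed_not_CDia_Bot (T : form -> Prop) (c : form) :
  closed T -> ~ T Bot -> ~ T (CDia c Bot).
Proof.
  intros HT Hbot H. apply Hbot, HT.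
  eapply Der_mp; [apply Der_thm, ax_CNdia | apply Der_hyp, H].
Qed.

Lemma maximal_avoiding_closed (T : form -> Prop) (a : form) :
  ~ Der T a -> (forall x, ~ T x -> Der (extend T x) a) -> closed T.
Proof.
  intros Ha Hmax x Dx. apply NNPP; intro Hx. apply Ha.
  eapply Der_mp; [apply Der_deduction, Hmax, Hx | exact Dx].
Qed.

Lemma maximal_avoiding_prime (T : form -> Prop) (a : form) :
  ~ Der T a -> (forall x, ~ T x -> Der (extend T x) a) -> prime T.
Proof.
  intros Ha Hmax x y Hxy. apply NNPP; intro Hn. apply Ha.
  eapply Der_mp; [eapply Der_mp; [eapply Der_mp; [apply Der_thm, (ax_O3 x y a) |] |] |].
  - apply Der_deduction, Hmax; tauto.
  - apply Der_deduction, Hmax; tauto.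
  - apply Der_hyp, Hxy.
Qed.

Definition pair_code (x y : nat) : nat := Cantor.to_nat (x, y).

Lemma pair_code_inj (x y x' y' : nat) : pair_code x y = pair_code x' y' -> x = x' /\ y = y'.
Proof.
  intro H. apply (f_equal Cantor.of_nat) in H.
  unfold pair_code in H; rewrite !Cantor.cancel_of_to in H.
  injection H; auto.
Qed.

Fixpoint form_code (f : form) : nat :=
  match f with
  | Atom n => pair_code 0 n
  | Bot => pair_code 1 0
  | And a b => pair_code 2 (pair_code (form_code a) (form_code b))
  | Or a b => pair_code 3 (pair_code (form_code a) (form_code b))
  | Imp a b => pair_code 4 (pair_code (form_code a) (form_code b))
  | CBox a b => pair_code 5 (pair_code (form_code a) (form_code b))
  | CDia a b => pair_code 6 (pair_code (form_code a) (form_code b))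
  end.

Lemma form_code_inj (f g : form) : form_code f = form_code g -> f = g.
Proof.
  revert g; induction f; intro g; destruct g; simpl; intro H;
  repeat match goal with
  | H : pair_code _ _ = pair_code _ _ |- _ => apply pair_code_inj in H; destruct H
  end; try discriminate; subst; f_equal; auto.
Qed.

Section Lindenbaum.

Variables (G : form -> Prop) (a : form).

Fixpoint stage (n : nat) : form -> Prop :=
  match n with
  | 0 => G
  | S n => fun x => stage n x \/ (form_code x = n /\ ~ Der (extend (stage n) x) a)
  end.

Definition lindenbaum : form -> Prop := fun x => exists n, stage n x.

Lemma stage_mono (n m : nat) : n <= m -> forall x, stage n x -> stage m x.
Proof. induction 1; simpl; auto. Qed.

Lemma Der_lindenbaum_stage (x : form) : Der lindenbaum x -> exists n, Der (stage n) x.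
Proof.
  induction 1 as [x [n Hn] | x Hx | x y _ [n1 H1] _ [n2 H2]].
  - exists n; apply Der_hyp, Hn.
  - exists 0; apply Der_thm, Hx.
  - exists (max n1 n2). eapply Der_mp.
    + eapply Der_weaken; [| exact H1]. apply stage_mono; lia.
    + eapply Der_weaken; [| exact H2]. apply stage_mono; lia.
Qed.

Hypothesis G_avoids : ~ Der G a.

Lemma stage_avoids (n : nat) : ~ Der (stage n) a.
Proof.
  induction n as [| n IHn]; simpl; [exact G_avoids |].
  destruct (classic (exists x, form_code x = n /\ ~ Der (extend (stage n) x) a))
    as [[x [Hx Hxa]] | Hnone]; intro D.
  - apply Hxa. eapply Der_weaken; [| exact D].
    intros z [Hz | [Hz _]]; [left; exact Hz | right; apply form_code_inj; congruence].
  - apply IHn. eapply Der_weaken; [| exact D].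
    intros z [Hz | Hz]; [exact Hz | exfalso; apply Hnone; exists z; exact Hz].
Qed.

Lemma lindenbaum_avoids : ~ Der lindenbaum a.
Proof.
  intro D. destruct (Der_lindenbaum_stage _ D) as [n Hn]. exact (stage_avoids n Hn).
Qed.

Lemma lindenbaum_maximal (x : form) : ~ lindenbaum x -> Der (extend lindenbaum x) a.
Proof.
  intro Hx. apply NNPP; intro Hxa. apply Hx. exists (S (form_code x)). right.
  split; [reflexivity |]. intro D; apply Hxa. eapply Der_weaken; [| exact D].
  intros z [Hz | Hz]; [left; exists (form_code x); exact Hz | right; exact Hz].
Qed.

End Lindenbaum.

Lemma lindenbaum_lemma (G : form -> Prop) (a : form) : ~ Der G a ->
  exists T, (forall x, G x -> T x) /\ closed T /\ prime T /\ ~ T a.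
Proof.
  intro Ha. exists (lindenbaum G a).
  pose proof (lindenbaum_avoids G a Ha) as Havoid.
  pose proof (lindenbaum_maximal G a) as Hmax.
  split; [intros x Hx; exists 0; exact Hx |].
  split; [exact (maximal_avoiding_closed _ _ Havoid Hmax) |].
  split; [exact (maximal_avoiding_prime _ _ Havoid Hmax) |].
  intro H. exact (Havoid (Der_hyp _ _ H)).
Qed.

Record world : Type := {
  th : form -> Prop;
  th_closed : closed th;
  th_prime : prime th;
  th_consistent : ~ th Bot;
  tag_ante : form;
  tag_succ : form;
  tag_refuted : ~ th (CDia tag_ante tag_succ)
}.

Definition retag (w : world) (c d : form) (H : ~ th w (CDia c d)) : world :=
  {| th := th w; th_closed := th_closed w; th_prime := th_prime w;
     th_consistent := th_consistent w; tag_ante := c; tag_succ := d; tag_refuted := H |}.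

Lemma th_thm (w : world) (x : form) : ConstCK x -> th w x.
Proof. intro Hx. apply th_closed, Der_thm, Hx. Qed.

Lemma th_mp (w : world) (x y : form) : th w (Imp x y) -> th w x -> th w y.
Proof. intros Hxy Hx. apply th_closed. eapply Der_mp; apply Der_hyp; eassumption. Qed.

Lemma world_extension (G : form -> Prop) (a : form) :
  ~ Der G a -> exists w : world, (forall x, G x -> th w x) /\ ~ th w a.
Proof.
  intro Ha. destruct (lindenbaum_lemma G a Ha) as [T [HGT [Hclosed [Hprime HTa]]]].
  assert (Hbot : ~ T Bot).
  { intro Hbot. apply HTa, Hclosed.
    eapply Der_mp; [apply Der_thm, ax_EFQ | apply Der_hyp, Hbot]. }
  exists {| th := T; th_closed := Hclosed; th_prime := Hprime; th_consistent := Hbot;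
            tag_refuted := closed_not_CDia_Bot T Bot Hclosed Hbot |}.
  split; assumption.
Qed.

Lemma world_inhabited : inhabited world.
Proof.
  destruct (world_extension no_hyp Bot) as [w _].
  - intro D. apply ConstCK_consistent, ConstCK_of_Der_no_hyp, D.
  - exact (inhabits w).
Qed.

Lemma ConstCK_Imp_of_world_incl (a c : form) :
  (forall w : world, th w a -> th w c) -> ConstCK (Imp a c).
Proof.
  intro H. apply NNPP; intro Hn.
  destruct (world_extension (extend no_hyp a) c) as [w [Hw Hc]].
  - intro D. apply Hn, ConstCK_Imp_of_Der, D.
  - apply Hc, H, Hw. right; reflexivity.
Qed.

Lemma ConstCK_Iff_of_same_worlds (a c : form) :
  (forall w : world, th w a <-> th w c) -> ConstCK (Iff a c).
Proof.
  intro H. apply ConstCK_Iff_intro; apply ConstCK_Imp_of_world_incl; intro w; apply H.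
Qed.

Definition canon_le (w w' : world) : Prop := forall x, th w x -> th w' x.

Definition canon_R (X : world -> Prop) (w v : world) : Prop :=
  exists c, (forall u, X u <-> th u c) /\
    (forall t, th w (CBox c t) -> th v t) /\
    ((forall u, X u <-> th u (tag_ante w)) -> ~ th v (tag_succ w)).

Definition canon_model : model :=
  {| W := world; W_nonempty := world_inhabited; le := canon_le;
     le_refl := fun w x h => h; le_trans := fun u v w h1 h2 x h => h2 x (h1 x h);
     R := canon_R; V := fun w n => th w (Atom n); V_mono := fun w w' n h1 h2 => h1 _ h2 |}.

Lemma truth_Imp (a b : form) (w : world) :
  (forall u, sat canon_model u a <-> th u a) ->
  (forall u, sat canon_model u b <-> th u b) ->
  sat canon_model w (Imp a b) <-> th w (Imp a b).
Proof.
  intros IHa IHb; simpl; split.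
  - intro H. apply NNPP; intro Hn.
    destruct (world_extension (extend (th w) a) b) as [u [Hwu Hb]].
    + intro D. apply Hn, th_closed, Der_deduction, D.
    + apply Hb, IHb, H.
      * intros x Hx; apply Hwu; left; exact Hx.
      * apply IHa, Hwu; right; reflexivity.
  - intros H w' Hww' Ha. apply IHb. eapply th_mp; [apply Hww', H | apply IHa, Ha].
Qed.

Lemma truth_CBox (a b : form) (w : world) :
  (forall u, sat canon_model u a <-> th u a) ->
  (forall u, sat canon_model u b <-> th u b) ->
  sat canon_model w (CBox a b) <-> th w (CBox a b).
Proof.
  intros IHa IHb; simpl; split.
  - intro H. apply NNPP; intro Hn.
    destruct (world_extension (cbox_proj a (th w)) b) as [v [Hwv Hb]].
    + intro D. apply Hn, Der_cbox_proj; [apply th_closed | exact D].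
    + set (w' := retag w a Bot (closed_not_CDia_Bot _ a (th_closed w) (th_consistent w))).
      apply Hb, IHb, (H w' v); [intros x Hx; exact Hx |].
      exists a. split; [exact IHa |]. split; [exact Hwv |].
      intros _ Hbot. exact (th_consistent v Hbot).
  - intros H w' v Hww' [c [Hac [Hbox _]]]. apply IHb, Hbox.
    assert (Eac : ConstCK (Iff a c)).
    { apply ConstCK_Iff_of_same_worlds; intro u. rewrite <- IHa. apply Hac. }
    eapply th_mp; [apply th_thm, ConstCK_Iff_l, r_RAbox, Eac | apply Hww', H].
Qed.

Lemma refuted_CDia_avoiding_tag (a : form) (w : world) :
  exists z, ~ th w (CDia a z) /\
    ((forall u : world, th u a <-> th u (tag_ante w)) -> z = tag_succ w).
Proof.
  destruct (classic (forall u : world, th u a <-> th u (tag_ante w))) as [Ha | Ha].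
  - exists (tag_succ w). split; [| reflexivity].
    intro H. apply (tag_refuted w). eapply th_mp; [| exact H].
    apply th_thm, ConstCK_Iff_l, r_RAdia, ConstCK_Iff_of_same_worlds, Ha.
  - exists Bot. split; [| tauto].
    apply closed_not_CDia_Bot; [apply th_closed | apply th_consistent].
Qed.

Lemma truth_CDia (a b : form) (w : world) :
  (forall u, sat canon_model u a <-> th u a) ->
  (forall u, sat canon_model u b <-> th u b) ->
  sat canon_model w (CDia a b) <-> th w (CDia a b).
Proof.
  intros IHa IHb; simpl; split.
  - intro H. apply NNPP; intro Hn.
    destruct (H (retag w a b Hn)) as [v [[c [_ [_ Htag]]] Hb]]; [intros x Hx; exact Hx |].
    exact (Htag IHa (proj1 (IHb v) Hb)).
  - intros H w' Hww'.
    destruct (refuted_CDia_avoiding_tag a w') as [z [Hz Hz_tag]].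
    destruct (world_extension (extend (cbox_proj a (th w')) b) z) as [v [Hv Hzv]].
    + intro D. apply Hz.
      eapply th_mp; [eapply th_mp; [apply th_thm, ax_CKdia |] | apply Hww', H].
      apply Der_cbox_proj; [apply th_closed | apply Der_deduction, D].
    + exists v. split; [| apply IHb, Hv; right; reflexivity].
      exists a. split; [exact IHa |].
      split; [intros t Ht; apply Hv; left; exact Ht |].
      intro Htag. rewrite <- Hz_tag; [exact Hzv |].
      intro u. rewrite <- IHa. apply Htag.
Qed.

Lemma truth_lemma (f : form) (w : world) : sat canon_model w f <-> th w f.
Proof.
  revert w; induction f as [n | | a IHa b IHb | a IHa b IHb | a IHa b IHb
                          | a IHa b IHb | a IHa b IHb]; intro w.
  - reflexivity.
  - simpl. split; [contradiction | apply th_consistent].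
  - simpl. rewrite IHa, IHb. split.
    + intros [Ha Hb]. apply th_closed, Der_And_intro; apply Der_hyp; assumption.
    + intro H. split; apply th_closed; [eapply Der_And_l | eapply Der_And_r]; apply Der_hyp, H.
  - simpl. rewrite IHa, IHb. split; [| apply th_prime].
    intros [H | H]; apply th_closed; (eapply Der_mp; [apply Der_thm | apply Der_hyp, H]).
    + apply ax_O1.
    + apply ax_O2.
  - apply truth_Imp; assumption.
  - apply truth_CBox; assumption.
  - apply truth_CDia; assumption.
Qed.

Theorem ConstCK_complete (phi : form) : (forall M, valid_in M phi) -> ConstCK phi.
Proof.
  intro H. apply NNPP; intro Hn.
  destruct (world_extension no_hyp phi) as [w [_ Hw]].
  - intro D. apply Hn, ConstCK_of_Der_no_hyp, D.
  - apply Hw, truth_lemma, (H canon_model w).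
Qed.

Theorem theorem9 : forall phi : form,
  (forall M : model, valid_in M phi) <-> ConstCK phi.
Proof.
  intro phi. split.
  - apply ConstCK_complete.
  - intros H M. apply ConstCK_sound, H.
Qed.
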